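(* For any $s\in\mathcal S=\{s\in\mathbb R^b:1\ge s_1\ge\cdots\ge s_b\ge0\}$, the matrix $J(s)$ is invertible.
   Context: Let $b\ge1$ be an integer and $\lambda=1-\gamma/N^{\alpha}$ with $N\ge1$, $\gamma\in(0,1]$, $\alpha>0$ (so $0\le\lambda<1$). $J(s)$ is the $b\times b$ tridiagonal matrix (the Jacobian of the mean-field vector field $f_k(s)=\lambda(s_{k-1}^2-s_k^2)-(s_k-s_{k+1})$, $s_0=1$, $s_{b+1}=0$) with diagonal entries $J_{kk}=-2\lambda s_k-1$ ($k=1,\dots,b$), superdiagonal entries $J_{k,k+1}=1$ and subdiagonal entries $J_{k+1,k}=2\lambda s_k$ ($k=1,\dots,b-1$). *)

From HB Require Import structures.
From mathcomp Require Import all_boot all_order all_algebra.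
From mathcomp Require Import all_classical all_reals all_analysis.
Set Implicit Arguments. Unset Strict Implicit. Unset Printing Implicit Defensive.
Import Order.TTheory GRing.Theory Num.Theory.
Local Open Scope ring_scope.

(* Indices are 0-based: paper index k corresponds to i : 'I_b with val i = k-1. *)

Definition lam {R : realType} (N : nat) (gamma alpha : R) : R :=
  1 - gamma / (N%:R `^ alpha).

Definition Jmat {R : realType} (b : nat) (l : R) (s : 'I_b -> R) : 'M[R]_b :=
  \matrix_(i < b, j < b)
    (if val i == val j then - (2 * l * s i) - 1
     else if (val j == (val i).+1)%N then 1
     else if (val i == (val j).+1)%N then 2 * l * s j
     else 0).

Definition inS {R : realType} (b : nat) (s : 'I_b -> R) : Prop :=
  (forall i : 'I_b, 0 <= s i <= 1) /\
  (forall i j : 'I_b, (val i <= val j)%N -> s j <= s i).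

From HB Require Import structures.
From mathcomp Require Import all_boot all_order all_algebra.
From mathcomp Require Import all_classical all_reals all_analysis.
From mathcomp Require Import lra.
Set Implicit Arguments. Unset Strict Implicit.
Import Order.TTheory GRing.Theory Num.Theory.
Local Open Scope ring_scope.

(* Write a_k = 2 lam s_k and extend x by zero outside 0..b-1.  If J x = 0,
   summing the first k+1 rows telescopes to the first integral
   x_{k+1} = x_0 + a_k x_k.  As a_k >= 0, induction gives x_0 x_k >= x_0^2
   for all k <= b, so the boundary value x_b = 0 forces x_0 = 0, and then the
   first integral makes every x_k vanish. *)

Lemma lam_ge0 (R : realType) (N : nat) (gamma alpha : R) :
  (1 <= N)%N -> gamma <= 1 -> 0 < alpha -> 0 <= lam N gamma alpha.
Proof.
move=> N_ge1 gamma_le1 alpha_gt0.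
have pow_ge1 : 1 <= N%:R `^ alpha :> R.
  have N_ge1R : 1 <= N%:R :> R by rewrite ler1n.
  by have := ler_powR N_ge1R (ltW alpha_gt0); rewrite powRr0.
rewrite /lam subr_ge0 ler_pdivrMr ?mul1r ?(lt_le_trans ltr01) //.
exact: le_trans gamma_le1 pow_ge1.
Qed.

Section TridiagonalKernel.
Variables (R : realDomainType) (n : nat) (a x : nat -> R).
Hypothesis x_row : forall k, (k < n)%N ->
  (if k is k'.+1 then a k' * x k' else 0) - (a k + 1) * x k + x k.+1 = 0.

Lemma tridiag_first_integral k : (k < n)%N -> x k.+1 = x 0 + a k * x k.
Proof.
elim: k => [|k IHk] lt_kn; first by have := x_row lt_kn; lra.
by have := x_row lt_kn; have := IHk (ltnW lt_kn); rewrite /=; lra.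
Qed.

Hypothesis a_ge0 : forall k, 0 <= a k.

Lemma tridiag_sqr_x0_le k : (k <= n)%N -> x 0 ^+ 2 <= x 0 * x k.
Proof.
elim: k => [|k IHk] le_kn; first by rewrite expr2.
rewrite tridiag_first_integral // mulrDr -expr2 mulrCA lerDl.
by rewrite mulr_ge0 // (le_trans (sqr_ge0 _) (IHk (ltnW le_kn))).
Qed.

Hypothesis x_n : x n = 0.

Lemma tridiag_kernel_eq0 k : (k <= n)%N -> x k = 0.
Proof.
have x0_eq0 : x 0 = 0.
  apply/eqP; rewrite -sqrf_eq0 eq_le sqr_ge0 andbT.
  by have := tridiag_sqr_x0_le (leqnn n); rewrite x_n mulr0.
elim: k => [|k IHk] le_kn //.
by rewrite tridiag_first_integral // x0_eq0 IHk ?(ltnW le_kn) // mulr0 addr0.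
Qed.

End TridiagonalKernel.

Definition zext (V : zmodType) (n : nat) (f : 'I_n -> V) (k : nat) : V :=
  oapp f 0 (insub k).

Lemma zext_val (V : zmodType) (n : nat) (f : 'I_n -> V) (i : 'I_n) :
  zext f i = f i.
Proof. by rewrite /zext valK. Qed.

Lemma zext_out (V : zmodType) (n : nat) (f : 'I_n -> V) (k : nat) :
  (n <= k)%N -> zext f k = 0.
Proof. by move=> le_nk; rewrite /zext insubF // ltnNge le_nk. Qed.

Lemma Jmat_entry (R : realType) (n : nat) (l : R) (s : 'I_n -> R)
    (i j : 'I_n) :
  Jmat l s i j = (if j == i :> nat then - (2 * l * s i) - 1 else 0)
    + (if j == i.+1 :> nat then 1 else 0)
    + (if j.+1 == i :> nat then 2 * l * s j else 0).
Proof.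
rewrite mxE /=.
have [/val_inj->|_] := eqVneq (i : nat) j.
  by rewrite (ltn_eqF (ltnSn j)) (gtn_eqF (ltnSn j)) !addr0.
rewrite add0r; have [->|_] := eqVneq (j : nat) i.+1; last by rewrite add0r eq_sym.
by rewrite gtn_eqF ?addr0.
Qed.

Lemma Jmat_row_sum (R : realType) (n : nat) (l : R) (s v : 'I_n -> R)
    (i : 'I_n) :
  \sum_j v j * Jmat l s i j =
  (if i : nat is k.+1 then 2 * l * zext s k * zext v k else 0)
  - (2 * l * zext s i + 1) * zext v i + zext v i.+1.
Proof.
rewrite (eq_bigr (fun j : 'I_n =>
    (if j == i :> nat then zext v j * (- (2 * l * s i) - 1) else 0)
  + (if j == i.+1 :> nat then zext v j else 0)
  + (if j.+1 == i :> nat then zext v j * (2 * l * zext s j) else 0))); last first.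
  move=> j _; rewrite Jmat_entry !zext_val mulrDr mulrDr.
  by rewrite !(fun_if (GRing.mul (v j))) !mulr0 mulr1.
rewrite !big_split /= -!big_mkcond.
rewrite (big_ord1_eq _ (fun k => zext v k * _)) (big_ord1_eq _ (zext v)).
rewrite ltn_ord !zext_val.
have -> : (if (i.+1 < n)%N then zext v i.+1 else 0) = zext v i.+1.
  by case: ltnP => // /zext_out ->.
case: i => [[|k] lt_kn] /=.
  by rewrite big_pred0_eq; lra.
under eq_bigl => j do rewrite eqSS.
by rewrite (big_ord1_eq _ (fun k => zext v k * (2 * l * zext s k))) ltnW //; lra.
Qed.

Lemma Jmat_unit (R : realType) (n : nat) (l : R) (s : 'I_n -> R) :
  0 <= l -> (forall i, 0 <= s i) -> Jmat l s \in unitmx.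
Proof.
move=> l_ge0 s_ge0.
rewrite unitmxE unitfE -det_tr; apply/negP => /det0P[v v_neq0 vJ].
pose a k := 2 * l * zext s k.
have a_ge0 k : 0 <= a k.
  by rewrite /a /zext; case: insub => [j|] /=; rewrite ?mulr0 // !mulr_ge0.
have x_row k : (k < n)%N ->
    (if k is k'.+1 then a k' * zext (v 0) k' else 0)
    - (a k + 1) * zext (v 0) k + zext (v 0) k.+1 = 0.
  move=> lt_kn; have /rowP/(_ (Ordinal lt_kn)) := vJ.
  rewrite mxE; under eq_bigr do rewrite mxE.
  by rewrite Jmat_row_sum mxE.
move/eqP: v_neq0; apply; apply/rowP => i; rewrite mxE.
have x_n : zext (v 0) n = 0 by rewrite zext_out.
by rewrite -zext_val (tridiag_kernel_eq0 x_row a_ge0 x_n) // ltnW.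
Qed.

Theorem lemma4 (R : realType) (b N : nat) (gamma alpha : R)
  (hb : (1 <= b)%N) (hN : (1 <= N)%N)
  (hg : 0 < gamma <= 1) (ha : 0 < alpha)
  (s : 'I_b -> R) (hs : inS s) :
  Jmat (lam N gamma alpha) s \in unitmx.
Proof.
case: hs => s01 _; case/andP: hg => _ gamma_le1.
apply: Jmat_unit; first exact: lam_ge0.
by move=> i; case/andP: (s01 i).
Qed.
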